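(* Let $R$ be a field, $S$ an idempotent semifield, and $v:R\to S$ a B\'ezout valuation such that the restriction $v^\circ:R^\circ\to S^\circ$ is surjective. Then there is a one-to-one correspondence between ideals $I\subseteq R^\circ$ and $k$-ideals $J\subseteq S^\circ$, given by $J=v(I)$ and $I=v^{-1}(J)$ (i.e. $I=\{a\in R^\circ: v(a)\in J\}$). This correspondence preserves prime ideals.
   Context: An idempotent semiring is a commutative semiring with $a+a=a$; it is ordered by $a\le b$ iff $a+b=b$. A semifield is a semiring whose nonzero elements are multiplicatively invertible. A (non-Archimedean) seminorm $v:R\to S$ satisfies $v(0)=0$, $v(1)=1$, $v(-1)=1$, $v(ab)\le v(a)v(b)$, $v(a+b)\le v(a)+v(b)$; it is a valuation if it is multiplicative ($v(ab)=v(a)v(b)$) and $v(a)\ne0$ for $a\neq0$. $R^\circ=\{a\in R:v(a)\le1\}$ and $S^\circ=\{x\in S:x\le1\}$; $v^\circ$ is the restriction of $v$. For $R$ a field and $S$ a semifield, a multiplicative seminorm $v$ is B\'ezout if for all $a,b\in R$ there exist $x,y\in R^\circ$ with $v(xa+yb)=v(a)+v(b)$. An ideal of a semiring $S'$ is a subset containing $0$, closed under addition and under multiplication by elements of $S'$; it is a $k$-ideal if $a+b\in I$ and $a\in I$ imply $b\in I$; it is prime if its complement is multiplicatively closed. *)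

From mathcomp Require Import all_boot all_algebra.
Set Implicit Arguments. Unset Strict Implicit. Unset Printing Implicit Defensive.
Import GRing.Theory.
Local Open Scope ring_scope.

Section Defs.
Variable S : comNzSemiRingType.

Definition idempotent_sr : Prop := forall a : S, a + a = a.
Definition semifield : Prop := forall a : S, a != 0 -> exists b : S, a * b = 1.
Definition leS (a b : S) : Prop := a + b = b.
Definition Scirc (x : S) : Prop := leS x 1.

Variable R : comNzRingType.
Variable v : R -> S.

Definition seminorm : Prop :=
  [/\ v 0 = 0, v 1 = 1, v (-1) = 1,
      (forall a b, leS (v (a * b)) (v a * v b)) &
      (forall a b, leS (v (a + b)) (v a + v b))].

Definition valuation : Prop :=
  [/\ seminorm, (forall a b, v (a * b) = v a * v b) &
      (forall a, a != 0 -> v a != 0)].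

Definition Rcirc (a : R) : Prop := leS (v a) 1.

Definition bezout : Prop :=
  forall a b : R, exists x y : R,
    [/\ Rcirc x, Rcirc y & v (x * a + y * b) = v a + v b].

Definition vcirc_surj : Prop := forall x : S, Scirc x -> exists2 a, Rcirc a & v a = x.

Definition ideal_Rcirc (I : R -> Prop) : Prop :=
  [/\ (forall a, I a -> Rcirc a), I 0,
      (forall a b, I a -> I b -> I (a + b)) &
      (forall r a, Rcirc r -> I a -> I (r * a))].

Definition prime_Rcirc (I : R -> Prop) : Prop :=
  ~ I 1 /\ (forall a b, Rcirc a -> Rcirc b -> ~ I a -> ~ I b -> ~ I (a * b)).

Definition kideal_Scirc (J : S -> Prop) : Prop :=
  [/\ (forall x, J x -> Scirc x), J 0,
      (forall x y, J x -> J y -> J (x + y)),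
      (forall r x, Scirc r -> J x -> J (r * x)) &
      (forall x y, Scirc x -> Scirc y -> J (x + y) -> J x -> J y)].

Definition prime_Scirc (J : S -> Prop) : Prop :=
  ~ J 1 /\ (forall x y, Scirc x -> Scirc y -> ~ J x -> ~ J y -> ~ J (x * y)).

Definition vimage (I : R -> Prop) : S -> Prop := fun x => exists2 a, I a & v a = x.
Definition vpreim (J : S -> Prop) : R -> Prop := fun a => Rcirc a /\ J (v a).

End Defs.

(* Since R is a field and v is multiplicative, v a <= v c with c <> 0 gives
   a = (a / c) * c with v (a / c) <= 1.  Hence an ideal of R^o contains every
   element whose value lies below the value of one of its elements, and this
   downward closure is exactly the k-property of v(I) in the idempotent
   semiring S^o, where y <= x + y.  Bezout makes v(I) closed under addition,
   surjectivity of v^o lifts elements of S^o back to R^o, and primality is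
   transported because v is multiplicative and onto S^o. *)
From mathcomp Require Import all_boot all_algebra.
Set Implicit Arguments. Unset Strict Implicit. Unset Printing Implicit Defensive.
Import GRing.Theory.
Local Open Scope ring_scope.

Section IdempotentSemiring.
Variable S : comNzSemiRingType.
Hypothesis idem : idempotent_sr S.

Lemma leS_refl (a : S) : leS a a.
Proof. exact: idem. Qed.

Lemma leS_trans (a b c : S) : leS a b -> leS b c -> leS a c.
Proof. by rewrite /leS => ab bc; rewrite -bc addrA ab. Qed.

Lemma leS_mul2r (a b c : S) : leS a b -> leS (a * c) (b * c).
Proof. by rewrite /leS => ab; rewrite -mulrDl ab. Qed.

Lemma leS_addl (x y : S) : leS y (x + y).
Proof. by rewrite /leS addrCA idem. Qed.

Lemma Scirc1 : Scirc (1 : S).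
Proof. exact: leS_refl. Qed.

Lemma ScircD (x y : S) : Scirc x -> Scirc y -> Scirc (x + y).
Proof. by rewrite /Scirc /leS => x1 y1; rewrite -addrA y1 x1. Qed.

Lemma ScircM (x y : S) : Scirc x -> Scirc y -> Scirc (x * y).
Proof.
by move=> x1 y1; apply: leS_trans (y1); rewrite -{2}[y]mul1r; apply: leS_mul2r.
Qed.

Lemma kideal_Scirc_le (J : S -> Prop) (w z : S) :
  kideal_Scirc J -> J w -> Scirc z -> leS z w -> J z.
Proof.
case=> JS _ _ _ Jk Jw z1 zw; apply: (Jk w z) => //; first exact: JS.
by rewrite addrC zw.
Qed.

End IdempotentSemiring.

Section Valuation.
Variables (R : fieldType) (S : comNzSemiRingType) (v : R -> S).
Hypothesis idem : idempotent_sr S.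
Hypothesis v_val : valuation v.

Lemma vM a b : v (a * b) = v a * v b.
Proof. by case: v_val. Qed.

Lemma v0 : v 0 = 0.
Proof. by case: v_val => -[]. Qed.

Lemma v1 : v 1 = 1.
Proof. by case: v_val => -[]. Qed.

Lemma vD_le a b : leS (v (a + b)) (v a + v b).
Proof. by case: v_val => -[]. Qed.

Lemma v_eq0 a : v a = 0 -> a = 0.
Proof.
case: v_val => _ _ v_neq0 va0; apply/eqP; apply: contraT => /v_neq0.
by rewrite va0 eqxx.
Qed.

Lemma v_mulVf c : c != 0 -> v c^-1 * v c = 1.
Proof. by move=> c0; rewrite -vM mulVf // v1. Qed.

Lemma Rcirc1 : Rcirc v 1.
Proof. by rewrite /Rcirc v1; apply: Scirc1. Qed.

Lemma RcircM a b : Rcirc v a -> Rcirc v b -> Rcirc v (a * b).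
Proof. by rewrite /Rcirc vM; apply: ScircM. Qed.

Lemma RcircD a b : Rcirc v a -> Rcirc v b -> Rcirc v (a + b).
Proof. by move=> a1 b1; apply: leS_trans (vD_le a b) (ScircD _ _). Qed.

Lemma Rcirc_div a c : c != 0 -> leS (v a) (v c) -> Rcirc v (a / c).
Proof.
move=> c0 ac; rewrite /Rcirc vM -(v_mulVf c0) [X in leS _ X]mulrC.
exact: leS_mul2r.
Qed.

Lemma ideal_Rcirc_le (I : R -> Prop) a c :
  ideal_Rcirc v I -> I c -> leS (v a) (v c) -> I a.
Proof.
case=> _ I0 _ IM Ic ac; have [c0 | c0] := eqVneq c 0.
  by move: ac; rewrite c0 v0 /leS addr0 => /v_eq0 ->.
by rewrite -(divfK c0 a); apply: IM (Rcirc_div c0 ac) Ic.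
Qed.

Lemma vpreim_vimage (I : R -> Prop) a :
  ideal_Rcirc v I -> vpreim v (vimage v I) a <-> I a.
Proof.
move=> II; have [IR _ _ _] := II; split => [[_ [c Ic vc]] | Ia].
  by apply: ideal_Rcirc_le II Ic _; rewrite vc; apply: leS_refl.
by split; [apply: IR | exists a].
Qed.

Lemma vimage_kideal (I : R -> Prop) :
  bezout v -> vcirc_surj v -> ideal_Rcirc v I -> kideal_Scirc (vimage v I).
Proof.
move=> bez surj II; have [IR I0 ID IM] := II; split.
- by move=> _ [a Ia <-]; apply: IR.
- by exists 0; rewrite ?v0.
- move=> _ _ [a Ia <-] [b Ib <-]; have [r [s [r1 s1 <-]]] := bez a b.
  by exists (r * a + s * b) => //; apply: ID; apply: IM.
- move=> s _ s1 [a Ia <-]; have [r r1 <-] := surj s s1.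
  by exists (r * a); rewrite ?vM //; apply: IM.
- move=> x y _ y1 [c Ic xy] _; have [b _ vb] := surj _ y1.
  exists b => //; apply: ideal_Rcirc_le II Ic _.
  by rewrite vb xy; apply: leS_addl.
Qed.

Lemma vpreim_ideal (J : S -> Prop) :
  kideal_Scirc J -> ideal_Rcirc v (vpreim v J).
Proof.
move=> JJ; have [_ J0 JD JM _] := JJ; split.
- by move=> a [].
- by rewrite /vpreim /Rcirc v0 /leS add0r.
- move=> a b [a1 Ja] [b1 Jb]; split; first exact: RcircD.
  exact: kideal_Scirc_le JJ (JD _ _ Ja Jb) (RcircD a1 b1) (vD_le a b).
- move=> r a r1 [a1 Ja]; split; first exact: RcircM.
  by rewrite vM; apply: JM.
Qed.

Lemma vimage_vpreim (J : S -> Prop) x :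
  vcirc_surj v -> (forall y, J y -> Scirc y) -> vimage v (vpreim v J) x <-> J x.
Proof.
move=> surj JS; split=> [[a [_ Ja] <-] // | Jx].
by have [a a1 vax] := surj x (JS x Jx); exists a => //; split; rewrite ?vax.
Qed.

Lemma prime_Rcirc_ext (I I' : R -> Prop) :
  (forall a, I a <-> I' a) -> prime_Rcirc v I -> prime_Rcirc v I'.
Proof.
move=> II' [I1 IM]; split=> [/II' // | a b a1 b1 I'a I'b /II'].
by apply: IM; rewrite // => /II'.
Qed.

Lemma prime_vpreim (J : S -> Prop) :
  vcirc_surj v -> prime_Scirc J <-> prime_Rcirc v (vpreim v J).
Proof.
move=> surj; split=> [[J1 JM] | [I1 IM]].
  split=> [[_] | a b a1 b1 Ja Jb [_]]; first by rewrite v1.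
  by rewrite vM; apply: JM => // Jv; [apply: Ja | apply: Jb]; split.
split=> [J1 | x y x1 y1 Jx Jy Jxy]; first by apply: I1; split; [apply: Rcirc1 | rewrite v1].
have [a a1 ea] := surj x x1; have [b b1 eb] := surj y y1; subst x y.
apply: (IM a b a1 b1) => [[] // | [] // | ].
by split; [apply: RcircM | rewrite vM].
Qed.

End Valuation.

Theorem theorem2p12 (R : fieldType) (S : comNzSemiRingType) (v : R -> S) :
  idempotent_sr S -> semifield S ->
  valuation v -> bezout v -> vcirc_surj v ->
  (forall I : R -> Prop, ideal_Rcirc v I ->
     [/\ kideal_Scirc (vimage v I),
         (forall a, vpreim v (vimage v I) a <-> I a) &
         (prime_Rcirc v I <-> prime_Scirc (vimage v I))]) /\
  (forall J : S -> Prop, kideal_Scirc J ->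
     [/\ ideal_Rcirc v (vpreim v J),
         (forall x, vimage v (vpreim v J) x <-> J x) &
         (prime_Scirc J <-> prime_Rcirc v (vpreim v J))]).
Proof.
move=> idem _ v_val bez surj; split=> [I II | J JJ].
  have back := vpreim_vimage idem v_val _ II.
  have prime_vI := prime_vpreim idem v_val (vimage v I) surj.
  split; [exact: vimage_kideal | exact: back | split => [pI | /prime_vI pvI]].
    by apply/prime_vI; apply: prime_Rcirc_ext pI => a; apply: iff_sym.
  exact: prime_Rcirc_ext pvI.
have [JS _ _ _ _] := JJ.
split; [exact: vpreim_ideal | move=> x | exact: prime_vpreim].
exact: vimage_vpreim.
Qed.
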